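(* There exist natural numbers $B_0,B_1,\dots$ such that the following holds. Let $f$ be a conjunction of basic likelihood formulas and negations of basic likelihood formulas, let $p_1,\dots,p_N$ be the primitive propositions occurring in $f$, let $M_N=2^{2^N}$, and let $\rho_1,\dots,\rho_{M_N}$ be propositional formulas over $p_1,\dots,p_N$, one from each propositional-equivalence class, with $\rho_1\equiv\mathit{false}$ and $\rho_{M_N}\equiv\mathit{true}$. Let $\bar f$ be the system over real variables $x_1,\dots,x_{M_N}$ obtained from $f$ by replacing each conjunct $\theta_1l(\phi_1)+\cdots+\theta_rl(\phi_r)\ge\alpha$ by $\sum_{j}\theta_j x_{i(j)}\ge\alpha$ and each negated conjunct $\neg(\theta_1l(\phi_1)+\cdots+\theta_rl(\phi_r)\ge\alpha)$ by $\sum_j\theta_jx_{i(j)}<\alpha$, where $\rho_{i(j)}$ is the listed formula equivalent to $\phi_j$. Let $\hat f$ be the system consisting of $\bar f$ together with: $x_1=0$; $x_{M_N}=1$; $x_i\ge0$ for all $i$; and, for all natural numbers $m,n,k\le B_{2^N}$ and indices $i_1,\dots,i_m,i_{m+1}\in\{1,\dots,M_N\}$ such that both $\rho_{i_{m+1}}\Rightarrow\bigvee_{J\subseteq\{1,\dots,m\},|J|=k+n}\bigwedge_{j\in J}\rho_{i_j}$ and $\bigvee_{J\subseteq\{1,\dots,m\},|J|=k}\bigwedge_{j\in J}\rho_{i_j}$ are propositional tautologies, the inequality $x_{i_1}+\cdots+x_{i_m}-n\,x_{i_{m+1}}\ge k$. Then $f$ is satisfiable in some upper probability structure iff $\hat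 f$ has a real solution; moreover, if $\hat f$ has a solution then $f$ is satisfiable in an upper probability structure with at most $2^{|f|}$ worlds.
   Context: Fix a set $\Phi_0$ of primitive propositions; propositional formulas are built from $\Phi_0$ with $\wedge,\neg$ (plus the constant $\mathit{true}$, with $\mathit{false}=\neg\mathit{true}$). A term is $\theta_1 l(\phi_1)+\cdots+\theta_k l(\phi_k)$ with $k\ge1$, reals $\theta_i$ and propositional formulas $\phi_i$; a basic likelihood formula is $t\ge\alpha$ for a term $t$ and real $\alpha$; likelihood formulas are Boolean combinations (via $\neg,\wedge$) of basic likelihood formulas. $|f|$ is the number of symbols needed to write $f$, each coefficient counting as one symbol. An upper probability structure is $M=(\Omega,\Sigma,\mathcal{P},\pi)$ with $\Sigma$ an algebra on $\Omega$, $\mathcal{P}$ a set of finitely additive probability measures on $\Sigma$, and $\pi$ assigning to each $s\in\Omega$ a truth assignment to $\Phi_0$, such that $[\![p]\!]_M=\{s:\pi(s)(p)=\mathbf{true}\}\in\Sigma$ for each $p$; $[\![\phi]\!]_M$ is defined for all propositional $\phi$ in the standard way. With $\mathcal{P}^*(X)=\sup\{\mu(X):\mu\in\mathcal{P}\}$: $M\models\theta_1 l(\phi_1)+\cdots+\theta_k l(\phi_k)\ge\alpha$ iff $\sum_i\theta_i\mathcal{P}^*([\![\phi_i]\!]_M)\ge\alpha$; $M\models\neg f$ iff $M\not\models f$; $M\models f\wedge g$ iff both. $f$ is satisfiable if $M\models f$ for some upper probability structure $M$. *)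

From Stdlib Require Import Reals List Arith.
From Coquelicot Require Import Rbar Lub.
Import ListNotations.
Open Scope R_scope.

Inductive pformula : Type :=
| PTrue : pformula
| PVar : nat -> pformula
| PNot : pformula -> pformula
| PAnd : pformula -> pformula -> pformula.

Definition PFalse : pformula := PNot PTrue.

Fixpoint peval (v : nat -> bool) (phi : pformula) : bool :=
  match phi with
  | PTrue => true
  | PVar p => v p
  | PNot a => negb (peval v a)
  | PAnd a b => andb (peval v a) (peval v b)
  end.

Definition pequiv (a b : pformula) : Prop := forall v : nat -> bool, peval v a = peval v b.

Fixpoint pvars (phi : pformula) : list nat :=
  match phi with
  | PTrue => []
  | PVar p => [p]
  | PNot a => pvars a
  | PAnd a b => pvars a ++ pvars b
  end.

Fixpoint psize (phi : pformula) : nat :=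
  match phi with
  | PTrue => 1%nat
  | PVar _ => 1%nat
  | PNot a => S (psize a)
  | PAnd a b => (psize a + 1 + psize b)%nat
  end.

(* a term theta_1 l(phi_1) + ... + theta_k l(phi_k), k >= 1:
   the first summand together with the list of the remaining ones *)
Definition term : Type := ((R * pformula) * list (R * pformula))%type.

Definition term_summands (t : term) : list (R * pformula) := fst t :: snd t.

Inductive lformula : Type :=
| LBasic : term -> R -> lformula          (* t >= alpha *)
| LNot : lformula -> lformula
| LAnd : lformula -> lformula -> lformula.

(* |f|: each summand theta l(phi) is written with the symbols
   theta, l, (, phi, ) ; summands are separated by + ; then >= alpha. *)
Definition summand_size (s : R * pformula) : nat := (4 + psize (snd s))%nat.

Definition term_size (t : term) : nat :=
  (fold_right (fun s n => summand_size s + n) 0 (term_summands t)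
   + length (snd t))%nat.

Fixpoint lsize (f : lformula) : nat :=
  match f with
  | LBasic t _ => (term_size t + 2)%nat
  | LNot g => S (lsize g)
  | LAnd g h => (lsize g + 1 + lsize h)%nat
  end.

Fixpoint lprops (f : lformula) : list nat :=
  match f with
  | LBasic t _ => flat_map (fun s => pvars (snd s)) (term_summands t)
  | LNot g => lprops g
  | LAnd g h => lprops g ++ lprops h
  end.

Definition props_of (f : lformula) : list nat := nodup Nat.eq_dec (lprops f).

Record literal : Type := mkLit {
  lit_pos : bool;
  lit_term : term;
  lit_alpha : R }.

Definition lit_formula (l : literal) : lformula :=
  if lit_pos l then LBasic (lit_term l) (lit_alpha l)
  else LNot (LBasic (lit_term l) (lit_alpha l)).

Fixpoint conj_lits (l0 : literal) (ls : list literal) : lformula :=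
  match ls with
  | [] => lit_formula l0
  | l1 :: ls' => LAnd (lit_formula l0) (conj_lits l1 ls')
  end.

Definition is_algebra {W : Type} (Sig : (W -> Prop) -> Prop) : Prop :=
  Sig (fun _ => True) /\
  (forall X, Sig X -> Sig (fun w => ~ X w)) /\
  (forall X Y, Sig X -> Sig Y -> Sig (fun w => X w \/ Y w)).

Definition is_fa_prob {W : Type} (Sig : (W -> Prop) -> Prop)
  (mu : (W -> Prop) -> R) : Prop :=
  mu (fun _ => True) = 1 /\
  (forall X, Sig X -> 0 <= mu X) /\
  (forall X Y, Sig X -> Sig Y -> (forall w, X w -> Y w -> False) ->
     mu (fun w => X w \/ Y w) = mu X + mu Y).

Record ups : Type := mkUPS {
  ups_W : Type;
  ups_Sig : (ups_W -> Prop) -> Prop;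
  ups_P : ((ups_W -> Prop) -> R) -> Prop;
  ups_pi : ups_W -> nat -> bool;
  ups_alg : is_algebra ups_Sig;
  ups_meas : forall mu, ups_P mu -> is_fa_prob ups_Sig mu;
  ups_nonempty : exists mu, ups_P mu;
  ups_prim : forall p : nat, ups_Sig (fun w => ups_pi w p = true) }.

Definition psem (M : ups) (phi : pformula) : ups_W M -> Prop :=
  fun w => peval (ups_pi M w) phi = true.

Definition upper (M : ups) (X : ups_W M -> Prop) : R :=
  real (Lub_Rbar (fun r => exists mu, ups_P M mu /\ r = mu X)).

Fixpoint lsat (M : ups) (f : lformula) : Prop :=
  match f with
  | LBasic t a =>
      fold_right (fun s acc => fst s * upper M (psem M (snd s)) + acc) 0
        (term_summands t) >= a
  | LNot g => ~ lsat M g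
  | LAnd g h => lsat M g /\ lsat M h
  end.

Definition satisfiable (f : lformula) : Prop := exists M : ups, lsat M f.

Definition at_most_worlds (M : ups) (n : nat) : Prop :=
  exists l : list (ups_W M), (forall w, In w l) /\ (length l <= n)%nat.

Definition lin_val (ix : pformula -> nat) (x : nat -> R) (t : term) : R :=
  fold_right (fun s acc => fst s * x (ix (snd s)) + acc) 0 (term_summands t).

Definition lit_ineq (ix : pformula -> nat) (x : nat -> R) (l : literal) : Prop :=
  if lit_pos l then lin_val ix x (lit_term l) >= lit_alpha l
  else lin_val ix x (lit_term l) < lit_alpha l.

Definition solves_bar (ix : pformula -> nat) (x : nat -> R)
  (l0 : literal) (ls : list literal) : Prop :=
  forall l, In l (l0 :: ls) -> lit_ineq ix x l.

(* valuation v satisfies  \/_{J subset {1..m}, |J| = k} /\_{j in J} rho_{i_j},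
   where positions 1..m are coded 0..m-1 and i_j = idx (j-1) *)
Definition big_disj (rho : nat -> pformula) (m : nat) (idx : nat -> nat)
  (k : nat) (v : nat -> bool) : Prop :=
  exists J : list nat, NoDup J /\ length J = k /\
    (forall j, In j J -> (j < m)%nat) /\
    (forall j, In j J -> peval v (rho (idx j)) = true).

Definition sumx (x : nat -> R) (m : nat) (idx : nat -> nat) : R :=
  fold_right (fun j acc => x (idx j) + acc) 0 (seq 0 m).

(* x solves hat f (with bound Bb = B_{2^N}, and MN = 2^{2^N} variables) *)
Definition solves_hat (rho : nat -> pformula) (ix : pformula -> nat)
  (MN Bb : nat) (l0 : literal) (ls : list literal) (x : nat -> R) : Prop :=
  solves_bar ix x l0 ls /\
  x 1%nat = 0 /\ x MN = 1 /\
  (forall i, (1 <= i <= MN)%nat -> x i >= 0) /\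
  (forall (m n k : nat) (idx : nat -> nat),
     (m <= Bb)%nat -> (n <= Bb)%nat -> (k <= Bb)%nat ->
     (* i_1..i_m are idx 0..idx (m-1); i_{m+1} is idx m *)
     (forall j, (j <= m)%nat -> (1 <= idx j <= MN)%nat) ->
     (forall v, peval v (rho (idx m)) = true -> big_disj rho m idx (k + n) v) ->
     (forall v, big_disj rho m idx k v) ->
     sumx x m idx - INR n * x (idx m) >= INR k).

Definition rho_listing (ps : list nat) (MN : nat) (rho : nat -> pformula) : Prop :=
  (forall i, (1 <= i <= MN)%nat -> forall p, In p (pvars (rho i)) -> In p ps) /\
  (forall i j, (1 <= i <= MN)%nat -> (1 <= j <= MN)%nat ->
     pequiv (rho i) (rho j) -> i = j) /\
  (forall phi, (forall p, In p (pvars phi) -> In p ps) ->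
     exists i, (1 <= i <= MN)%nat /\ pequiv phi (rho i)) /\
  pequiv (rho 1%nat) PFalse /\
  pequiv (rho MN) PTrue.

Definition lit_forms (l : literal) : list pformula :=
  map snd (term_summands (lit_term l)).

Definition index_map (rho : nat -> pformula) (MN : nat) (ix : pformula -> nat)
  (l0 : literal) (ls : list literal) : Prop :=
  forall l phi, In l (l0 :: ls) -> In phi (lit_forms l) ->
    (1 <= ix phi <= MN)%nat /\ pequiv (rho (ix phi)) phi.

(* Soundness: take x_i := P^*([[rho_i]]).  The two tautologies say that every cell of the
   partition generated by the primitives lies in at least k of the sets [[rho_(i_j)]],
   j <= m, and in at least k + n of them if it lies in [[rho_(i_(m+1))]]; summing over the
   cells gives  sum_j mu(rho_(i_j)) - n mu(rho_(i_(m+1))) >= k  for every mu in P, and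
   passing to suprema gives the inequality for x.

   Completeness: over the K = 2^N atoms (valuations of the primitives), consider for each
   listed formula rho_i the linear system  mu >= 0, sum mu >= 1, mu(rho_s) <= x_s for all s,
   mu(rho_i) >= x_i  in the atom weights mu.  Fourier--Motzkin elimination shows that it is
   solvable unless a nonnegative integer combination of its rows, with all variables
   cancelled, reads 0 >= positive; the candidate combinations form a finite list that
   depends only on K and on the set of atoms satisfying rho_i.  A combination is a multiset
   of rows, and as such it is exactly an instance of the extra inequalities of hat f, with
   m, n, k bounded by its size.  So with B_K the largest such size every system is solvable,
   and the set P of all solutions, as measures on the K atoms, is an upper probability
   structure with P^*([[rho_i]]) = x_i, hence a model of f. *)

From Stdlib Require Import Reals List Arith.
From Coquelicot Require Import Rbar Lub.
From Stdlib Require Import ZArith Lia Lra Bool FunctionalExtensionality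
  PropExtensionality Classical ClassicalEpsilon.
Import ListNotations.
Open Scope R_scope.

(** * Finite sums *)

Definition lsum {A : Type} (g : A -> R) (L : list A) : R :=
  fold_right (fun a acc => g a + acc) 0 L.

Definition zsum {A : Type} (g : A -> Z) (L : list A) : Z :=
  fold_right (fun a acc => (g a + acc)%Z) 0%Z L.

Definition replicate {A : Type} (n : nat) (L : list A) : list A := concat (repeat L n).

Section ListSums.
Context {A : Type}.
Implicit Types (L : list A) (f g : A -> R).

Lemma lsum_app g L1 L2 : lsum g (L1 ++ L2) = lsum g L1 + lsum g L2.
Proof. induction L1 as [|a L1 IH]; simpl; [lra|]. unfold lsum in *; simpl; rewrite IH; lra. Qed.

Lemma lsum_ext f g L : (forall a, In a L -> f a = g a) -> lsum f L = lsum g L.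
Proof.
  induction L as [|a L IH]; intros H; [reflexivity|].
  unfold lsum in *; simpl. f_equal; [apply H; left; reflexivity|].
  apply IH. intros b Hb. apply H. right. exact Hb.
Qed.

Lemma lsum_plus f g L : lsum (fun a => f a + g a) L = lsum f L + lsum g L.
Proof. induction L as [|a L IH]; unfold lsum in *; simpl; [lra|]. rewrite IH; lra. Qed.

Lemma lsum_opp g L : lsum (fun a => - g a) L = - lsum g L.
Proof. induction L as [|a L IH]; unfold lsum in *; simpl; [lra|]. rewrite IH; lra. Qed.

Lemma lsum_scal_l c g L : lsum (fun a => c * g a) L = c * lsum g L.
Proof. induction L as [|a L IH]; unfold lsum in *; simpl; [lra|]. rewrite IH; lra. Qed.

Lemma lsum_scal_r c g L : lsum (fun a => g a * c) L = lsum g L * c.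
Proof. induction L as [|a L IH]; unfold lsum in *; simpl; [lra|]. rewrite IH; lra. Qed.

Lemma lsum_zero L : lsum (fun _ => 0) L = 0.
Proof. induction L as [|a L IH]; unfold lsum in *; simpl; [lra|]. rewrite IH; lra. Qed.

Lemma lsum_le f g L : (forall a, In a L -> f a <= g a) -> lsum f L <= lsum g L.
Proof.
  induction L as [|a L IH]; intros H; unfold lsum in *; simpl; [lra|].
  assert (f a <= g a) by (apply H; simpl; auto).
  assert (fold_right (fun b acc => f b + acc) 0 L <= fold_right (fun b acc => g b + acc) 0 L)
    by (apply IH; intros; apply H; simpl; auto).
  lra.
Qed.

Lemma lsum_nonneg g L : (forall a, In a L -> 0 <= g a) -> 0 <= lsum g L.
Proof. intros H. rewrite <- (lsum_zero L). apply lsum_le, H. Qed.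

Lemma lsum_replicate g n L : lsum g (replicate n L) = INR n * lsum g L.
Proof.
  unfold replicate. induction n as [|n IH]; simpl; [unfold lsum; simpl; lra|].
  rewrite lsum_app, IH. destruct n; simpl; lra.
Qed.

Lemma lsum_indicator (p : A -> bool) L :
  lsum (fun a => if p a then 1 else 0) L = INR (length (filter p L)).
Proof.
  induction L as [|a L IH]; simpl; [reflexivity|]. unfold lsum in *; simpl. rewrite IH.
  destruct (p a); simpl length; try rewrite S_INR; lra.
Qed.

Lemma zsum_app (g : A -> Z) L1 L2 : zsum g (L1 ++ L2) = (zsum g L1 + zsum g L2)%Z.
Proof. induction L1 as [|a L1 IH]; simpl; [lia|]. unfold zsum in *; simpl; rewrite IH; lia. Qed.

Lemma zsum_replicate (g : A -> Z) n L : zsum g (replicate n L) = (Z.of_nat n * zsum g L)%Z.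
Proof.
  unfold replicate. induction n as [|n IH]; cbn [repeat concat]; [reflexivity|].
  rewrite zsum_app, IH, Nat2Z.inj_succ. ring.
Qed.

Lemma zsum_le (f g : A -> Z) L : (forall a, In a L -> (f a <= g a)%Z) -> (zsum f L <= zsum g L)%Z.
Proof.
  induction L as [|a L IH]; intros H; unfold zsum in *; simpl; [lia|].
  assert (f a <= g a)%Z by (apply H; simpl; auto).
  assert (fold_right (fun b acc => (f b + acc)%Z) 0%Z L <= fold_right (fun b acc => (g b + acc)%Z) 0%Z L)%Z
    by (apply IH; intros; apply H; simpl; auto).
  lia.
Qed.

Lemma zsum_plus (f g : A -> Z) L : zsum (fun a => f a + g a)%Z L = (zsum f L + zsum g L)%Z.
Proof. induction L as [|a L IH]; unfold zsum in *; simpl; [lia|]. rewrite IH; lia. Qed.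

Lemma zsum_scal_l (c : Z) (g : A -> Z) L : zsum (fun a => c * g a)%Z L = (c * zsum g L)%Z.
Proof. induction L as [|a L IH]; unfold zsum in *; simpl; [lia|]. rewrite IH; ring. Qed.

Lemma IZR_zsum (g : A -> Z) L : IZR (zsum g L) = lsum (fun a => IZR (g a)) L.
Proof. induction L as [|a L IH]; simpl; [reflexivity|]. unfold zsum, lsum in *; simpl. rewrite plus_IZR, IH. reflexivity. Qed.

Lemma length_filter_zsum (p : A -> bool) L :
  Z.of_nat (length (filter p L)) = zsum (fun a => Z.b2z (p a)) L.
Proof.
  induction L as [|a L IH]; simpl; [reflexivity|]. unfold zsum in *; simpl.
  destruct (p a); cbn [length Z.b2z]; rewrite ?Nat2Z.inj_succ, IH; lia.
Qed.

End ListSums.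

Lemma lsum_flat_map {A B : Type} (h : A -> list B) (g : B -> R) (L : list A) :
  lsum g (flat_map h L) = lsum (fun a => lsum g (h a)) L.
Proof. induction L as [|a L IH]; cbn [flat_map]; [reflexivity|]. rewrite lsum_app, IH. reflexivity. Qed.

Lemma lsum_map {A B : Type} (g : B -> R) (h : A -> B) (L : list A) :
  lsum g (map h L) = lsum (fun a => g (h a)) L.
Proof. induction L as [|a L IH]; simpl; [reflexivity|]. unfold lsum in *; simpl. rewrite IH. reflexivity. Qed.

Lemma lsum_swap {A B : Type} (h : A -> B -> R) (L : list A) (L' : list B) :
  lsum (fun a => lsum (h a) L') L = lsum (fun b => lsum (fun a => h a b) L) L'.
Proof.
  induction L as [|a L IH]; simpl.
  - change (0 = lsum (fun _ => 0) L'). symmetry. apply lsum_zero.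
  - change (lsum (h a) L' + lsum (fun a => lsum (h a) L') L =
            lsum (fun b => h a b + lsum (fun a => h a b) L) L').
    rewrite IH, <- lsum_plus. reflexivity.
Qed.

Lemma length_filter_flat_map {A B : Type} (p : B -> bool) (h : A -> list B) (L : list A) :
  Z.of_nat (length (filter p (flat_map h L))) = zsum (fun a => Z.of_nat (length (filter p (h a)))) L.
Proof.
  induction L as [|a L IH]; simpl; [reflexivity|].
  rewrite filter_app, length_app, Nat2Z.inj_add, IH. reflexivity.
Qed.

Lemma lsum_seq_single (K b : nat) (g : nat -> R) :
  (b < K)%nat -> lsum (fun a => if Nat.eqb b a then g a else 0) (seq 0 K) = g b.
Proof.
  induction K as [|K IH]; intros Hb; [lia|].
  rewrite seq_S, lsum_app. unfold lsum at 2; simpl.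
  destruct (Nat.eqb_spec b K) as [->|Hne].
  - rewrite (lsum_ext _ (fun _ => 0)), lsum_zero; [lra|].
    intros a Ha. apply in_seq in Ha. destruct (Nat.eqb_spec K a); [lia|reflexivity].
  - rewrite IH by lia. lra.
Qed.

Lemma lsum_nth_seq (g : nat -> R) (L : list nat) (d : nat) :
  lsum (fun j => g (nth j L d)) (seq 0 (length L)) = lsum g L.
Proof.
  induction L as [|a L IH]; [reflexivity|].
  change (g a + lsum (fun j => g (nth j (a :: L) d)) (seq 1 (length L)) = g a + lsum g L).
  rewrite <- seq_shift, lsum_map. cbn [nth]. rewrite IH. reflexivity.
Qed.

(** * Fourier--Motzkin elimination *)

Lemma interval_pick (lo hi : list R) : (forall a b, In a lo -> In b hi -> a <= b) ->
  exists t, (forall a, In a lo -> a <= t) /\ (forall b, In b hi -> t <= b).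
Proof.
  induction lo as [|a lo IH]; intros H.
  - exists (fold_right Rmin 0 hi). split; [simpl; tauto|].
    clear. induction hi as [|b hi IH]; simpl; [tauto|].
    intros b' [<-|Hb']; [apply Rmin_l|]. eapply Rle_trans; [apply Rmin_r|auto].
  - destruct IH as [t [Hlo Hhi]]; [intros; apply H; simpl; auto|].
    exists (Rmax a t). split.
    + intros a' [<-|Ha']; [apply Rmax_l|]. eapply Rle_trans; [apply Hlo; auto|apply Rmax_r].
    + intros b Hb. apply Rmax_lub; auto. apply H; simpl; auto.
Qed.

Definition upd (mu : nat -> R) (j : nat) (t : R) : nat -> R :=
  fun k => if Nat.eqb k j then t else mu k.

Section FourierMotzkin.

(* Rows are labelled by [I]; row [r] is the constraint
   [sum_(j < K) coef r j * mu j >= d r].  A derived constraint is a finite multiset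
   of rows, i.e. a nonnegative integer combination of them. *)
Variables (I : Type) (coef : I -> nat -> Z) (K : nat).

Definition row_val (r : I) (mu : nat -> R) : R :=
  lsum (fun j => IZR (coef r j) * mu j) (seq 0 K).

Definition comb_coef (L : list I) (j : nat) : Z := zsum (fun r => coef r j) L.

Definition slack (d : I -> R) (L : list I) (mu : nat -> R) : R :=
  lsum (fun r => row_val r mu - d r) L.

Lemma row_val_upd r mu j t : (j < K)%nat ->
  row_val r (upd mu j t) = row_val r mu + IZR (coef r j) * (t - mu j).
Proof.
  intros Hj. unfold row_val.
  rewrite (lsum_ext _ (fun k => IZR (coef r k) * mu k +
             (if Nat.eqb j k then IZR (coef r k) * (t - mu k) else 0))).
  - rewrite lsum_plus, lsum_seq_single by exact Hj. reflexivity.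
  - intros k _. unfold upd. destruct (Nat.eqb_spec k j), (Nat.eqb_spec j k); subst; try lia; ring.
Qed.

Lemma slack_upd d L mu j t : (j < K)%nat ->
  slack d L (upd mu j t) = slack d L mu + IZR (comb_coef L j) * (t - mu j).
Proof.
  intros Hj. unfold slack, comb_coef. rewrite IZR_zsum, <- lsum_scal_r, <- lsum_plus.
  apply lsum_ext. intros r _. rewrite row_val_upd by exact Hj. ring.
Qed.

(* For [Lp] positive and [Ln] negative in [j], the multipliers make variable [j] cancel. *)
Definition combine (j : nat) (Lp Ln : list I) : list I :=
  replicate (Z.to_nat (- comb_coef Ln j)) Lp ++ replicate (Z.to_nat (comb_coef Lp j)) Ln.

Lemma comb_coef_combine j Lp Ln i :
  comb_coef (combine j Lp Ln) i =
  (Z.of_nat (Z.to_nat (- comb_coef Ln j)) * comb_coef Lp i +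
   Z.of_nat (Z.to_nat (comb_coef Lp j)) * comb_coef Ln i)%Z.
Proof. unfold combine, comb_coef at 1. rewrite zsum_app, !zsum_replicate. reflexivity. Qed.

Lemma slack_combine d j Lp Ln mu :
  slack d (combine j Lp Ln) mu =
  INR (Z.to_nat (- comb_coef Ln j)) * slack d Lp mu +
  INR (Z.to_nat (comb_coef Lp j)) * slack d Ln mu.
Proof. unfold combine, slack at 1. rewrite lsum_app, !lsum_replicate. reflexivity. Qed.

Definition positive_in j (Ls : list (list I)) := filter (fun L => Z.ltb 0 (comb_coef L j)) Ls.
Definition negative_in j (Ls : list (list I)) := filter (fun L => Z.ltb (comb_coef L j) 0) Ls.

Definition eliminate (j : nat) (Ls : list (list I)) : list (list I) :=
  filter (fun L => Z.eqb (comb_coef L j) 0) Ls ++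
  flat_map (fun Lp => map (combine j Lp) (negative_in j Ls)) (positive_in j Ls).

Definition slack_nonneg d Ls mu : Prop := forall L, In L Ls -> slack d L mu >= 0.

(* A derived constraint [L] with coefficient [z <> 0] in [j] holds after setting
   [mu j := t] iff [t] lies on the right side of [var_bound] ([z > 0]: above). *)
Definition var_bound d L mu j : R := mu j - slack d L mu / IZR (comb_coef L j).

Lemma slack_upd_pos d L mu j t : (j < K)%nat -> (0 < comb_coef L j)%Z ->
  var_bound d L mu j <= t -> slack d L (upd mu j t) >= 0.
Proof.
  intros Hj Hz Ht. apply IZR_lt in Hz. rewrite slack_upd by exact Hj. unfold var_bound in Ht.
  assert (E : slack d L mu = IZR (comb_coef L j) * (slack d L mu / IZR (comb_coef L j)))
    by (field; lra).
  nra.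
Qed.

Lemma slack_upd_neg d L mu j t : (j < K)%nat -> (comb_coef L j < 0)%Z ->
  t <= var_bound d L mu j -> slack d L (upd mu j t) >= 0.
Proof.
  intros Hj Hz Ht. apply IZR_lt in Hz. rewrite slack_upd by exact Hj. unfold var_bound in Ht.
  assert (E : slack d L mu = IZR (comb_coef L j) * (slack d L mu / IZR (comb_coef L j)))
    by (field; lra).
  nra.
Qed.

Lemma var_bound_combine d j Lp Ln mu :
  (0 < comb_coef Lp j)%Z -> (comb_coef Ln j < 0)%Z -> slack d (combine j Lp Ln) mu >= 0 ->
  var_bound d Lp mu j <= var_bound d Ln mu j.
Proof.
  intros Hp Hn Hc.
  rewrite slack_combine, !INR_IZR_INZ, !Z2Nat.id, opp_IZR in Hc by lia.
  apply IZR_lt in Hp. apply IZR_lt in Hn.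
  unfold var_bound. apply Rplus_le_compat_l, Ropp_le_contravar.
  apply (Rmult_le_reg_r (IZR (comb_coef Lp j) * - IZR (comb_coef Ln j))); [nra|].
  replace (slack d Ln mu / IZR (comb_coef Ln j) * (IZR (comb_coef Lp j) * - IZR (comb_coef Ln j)))
    with (- slack d Ln mu * IZR (comb_coef Lp j)) by (field; lra).
  replace (slack d Lp mu / IZR (comb_coef Lp j) * (IZR (comb_coef Lp j) * - IZR (comb_coef Ln j)))
    with (- slack d Lp mu * IZR (comb_coef Ln j)) by (field; lra).
  lra.
Qed.

Lemma eliminate_sound d j Ls mu : (j < K)%nat -> slack_nonneg d (eliminate j Ls) mu ->
  exists t, slack_nonneg d Ls (upd mu j t).
Proof.
  intros Hj Hs.
  destruct (interval_pick (map (fun L => var_bound d L mu j) (positive_in j Ls))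
                          (map (fun L => var_bound d L mu j) (negative_in j Ls)))
    as [t [Hlo Hhi]].
  - intros a b Ha Hb.
    apply in_map_iff in Ha as [Lp [<- HLp]]. apply in_map_iff in Hb as [Ln [<- HLn]].
    assert (Hc : slack d (combine j Lp Ln) mu >= 0).
    { apply Hs, in_or_app. right. apply in_flat_map. exists Lp. split; [exact HLp|].
      apply in_map. exact HLn. }
    apply filter_In in HLp as [_ Hp]. apply filter_In in HLn as [_ Hn].
    apply Z.ltb_lt in Hp. apply Z.ltb_lt in Hn.
    exact (var_bound_combine d j Lp Ln mu Hp Hn Hc).
  - exists t. intros L HL.
    destruct (Z.lt_trichotomy (comb_coef L j) 0) as [Hn|[H0|Hp]].
    + apply slack_upd_neg; [exact Hj|exact Hn|].
      apply Hhi, (in_map (fun L => var_bound d L mu j)), filter_In. split; [exact HL|]. apply Z.ltb_lt, Hn.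
    + rewrite slack_upd, H0 by exact Hj.
      assert (slack d L mu >= 0).
      { apply Hs, in_or_app. left. apply filter_In. split; [exact HL|]. apply Z.eqb_eq, H0. }
      lra.
    + apply slack_upd_pos; [exact Hj|exact Hp|].
      apply Hlo, (in_map (fun L => var_bound d L mu j)), filter_In. split; [exact HL|]. apply Z.ltb_lt, Hp.
Qed.

Lemma eliminate_comb_coef j Ls L i : In L (eliminate j Ls) ->
  (forall L', In L' Ls -> comb_coef L' i = 0%Z) -> comb_coef L i = 0%Z.
Proof.
  intros HL Hi. apply in_app_or in HL as [HL|HL].
  - apply filter_In in HL as [HL _]. apply Hi, HL.
  - apply in_flat_map in HL as [Lp [HLp HL]]. apply in_map_iff in HL as [Ln [<- HLn]].
    apply filter_In in HLp as [HLp _]. apply filter_In in HLn as [HLn _].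
    rewrite comb_coef_combine, (Hi Lp), (Hi Ln) by assumption. ring.
Qed.

Lemma eliminate_comb_coef_j j Ls L : In L (eliminate j Ls) -> comb_coef L j = 0%Z.
Proof.
  intros HL. apply in_app_or in HL as [HL|HL].
  - apply filter_In in HL as [_ H]. apply Z.eqb_eq, H.
  - apply in_flat_map in HL as [Lp [HLp HL]]. apply in_map_iff in HL as [Ln [<- HLn]].
    apply filter_In in HLp as [_ Hp]. apply filter_In in HLn as [_ Hn].
    apply Z.ltb_lt in Hp. apply Z.ltb_lt in Hn.
    rewrite comb_coef_combine, !Z2Nat.id by lia. ring.
Qed.

Fixpoint eliminate_below (k : nat) (Ls : list (list I)) : list (list I) :=
  match k with O => Ls | S k' => eliminate k' (eliminate_below k' Ls) end.

Lemma eliminate_below_comb_coef k Ls L j :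
  In L (eliminate_below k Ls) -> (j < k)%nat -> comb_coef L j = 0%Z.
Proof.
  revert L. induction k as [|k IH]; simpl; intros L HL Hj; [lia|].
  destruct (Nat.eq_dec j k) as [->|Hne].
  - eapply eliminate_comb_coef_j, HL.
  - eapply eliminate_comb_coef; [exact HL|]. intros L' HL'. apply IH; [exact HL'|lia].
Qed.

Lemma eliminate_below_sound d Ls k mu : (k <= K)%nat ->
  slack_nonneg d (eliminate_below k Ls) mu -> exists mu', slack_nonneg d Ls mu'.
Proof.
  revert mu. induction k as [|k IH]; simpl; intros mu Hk Hs; [exists mu; exact Hs|].
  destruct (eliminate_sound d k (eliminate_below k Ls) mu ltac:(lia) Hs) as [t Ht].
  exact (IH _ ltac:(lia) Ht).
Qed.

Definition certificates (rows : list I) : list (list I) :=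
  eliminate_below K (map (fun r => [r]) rows).

Lemma certificates_comb_coef rows L j :
  In L (certificates rows) -> (j < K)%nat -> comb_coef L j = 0%Z.
Proof. apply eliminate_below_comb_coef. Qed.

Theorem certificates_farkas (rows : list I) (d : I -> R) :
  (forall L, In L (certificates rows) -> lsum d L <= 0) ->
  exists mu, forall r, In r rows -> row_val r mu >= d r.
Proof.
  intros H.
  destruct (eliminate_below_sound d (map (fun r => [r]) rows) K (fun _ => 0) (le_n K))
    as [mu Hmu].
  - intros L HL. specialize (H L HL). unfold slack.
    rewrite (lsum_ext _ (fun r => - d r)), lsum_opp; [lra|].
    intros r _. unfold row_val. rewrite (lsum_ext _ (fun _ => 0)), lsum_zero by (intros; ring).
    ring.
  - exists mu. intros r Hr. specialize (Hmu [r] (in_map _ _ _ Hr)).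
    unfold slack, lsum in Hmu. simpl in Hmu. lra.
Qed.

End FourierMotzkin.

(** * Finitely additive measures on an algebra *)

Lemma set_ext {W : Type} (X Y : W -> Prop) : (forall w, X w <-> Y w) -> X = Y.
Proof.
  intros H. apply functional_extensionality. intros w.
  apply propositional_extensionality, H.
Qed.

Lemma peval_agree (v v' : nat -> bool) phi :
  (forall q, In q (pvars phi) -> v q = v' q) -> peval v phi = peval v' phi.
Proof.
  induction phi; simpl; intros H; try reflexivity.
  - apply H. left. reflexivity.
  - rewrite IHphi by exact H. reflexivity.
  - rewrite IHphi1, IHphi2 by (intros; apply H, in_or_app; auto). reflexivity.
Qed.

Definition bupd (u : nat -> bool) (p : nat) (b : bool) : nat -> bool :=
  fun q => if Nat.eqb q p then b else u q.

Section FinitelyAdditive.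
Variables (W : Type) (Sig : (W -> Prop) -> Prop) (mu : (W -> Prop) -> R).
Hypotheses (Halg : is_algebra Sig) (Hmu : is_fa_prob Sig mu).

Lemma algebra_full : Sig (fun _ => True).
Proof. apply Halg. Qed.

Lemma algebra_compl X : Sig X -> Sig (fun w => ~ X w).
Proof. apply Halg. Qed.

Lemma algebra_empty : Sig (fun _ => False).
Proof.
  replace (fun _ : W => False) with (fun w : W => ~ (fun _ : W => True) w)
    by (apply set_ext; tauto).
  apply algebra_compl, algebra_full.
Qed.

Lemma algebra_inter X Y : Sig X -> Sig Y -> Sig (fun w => X w /\ Y w).
Proof.
  intros HX HY.
  replace (fun w => X w /\ Y w) with (fun w => ~ (fun w => ~ X w \/ ~ Y w) w)
    by (apply set_ext; intros w; tauto).
  apply algebra_compl, Halg; apply algebra_compl; assumption.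
Qed.

Lemma measure_nonneg X : Sig X -> 0 <= mu X.
Proof. apply Hmu. Qed.

Lemma measure_empty : mu (fun _ => False) = 0.
Proof.
  destruct Hmu as [_ [_ Hadd]].
  assert (H := Hadd _ _ algebra_empty algebra_empty (fun _ f _ => f)). cbv beta in H.
  replace (fun w : W => False \/ False) with (fun _ : W => False) in H by (apply set_ext; tauto).
  lra.
Qed.

Lemma measure_split X A : Sig X -> Sig A ->
  mu X = mu (fun w => X w /\ A w) + mu (fun w => X w /\ ~ A w).
Proof.
  intros HX HA. destruct Hmu as [_ [_ Hadd]]. rewrite <- Hadd.
  - f_equal. apply set_ext. intros w. destruct (classic (A w)); tauto.
  - apply algebra_inter; assumption.
  - apply algebra_inter; [|apply algebra_compl]; assumption.
  - intros w; tauto.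
Qed.

Lemma measure_le_1 X : Sig X -> mu X <= 1.
Proof.
  intros HX. destruct Hmu as [H1 _]. rewrite <- H1.
  rewrite (measure_split (fun _ => True) X algebra_full HX).
  replace (fun w : W => True /\ X w) with X by (apply set_ext; tauto).
  assert (0 <= mu (fun w => True /\ ~ X w)).
  { apply measure_nonneg, algebra_inter; [apply algebra_full|apply algebra_compl, HX]. }
  lra.
Qed.

Variable pi : W -> nat -> bool.
Hypothesis Hprim : forall p, Sig (fun w => pi w p = true).

Definition sat_set (phi : pformula) : W -> Prop := fun w => peval (pi w) phi = true.

Lemma algebra_sat_set phi : Sig (sat_set phi).
Proof.
  unfold sat_set; induction phi; simpl.
  - replace (fun _ : W => true = true) with (fun _ : W => True) by (apply set_ext; tauto).
    apply algebra_full.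
  - apply Hprim.
  - replace (fun w => negb (peval (pi w) phi) = true)
      with (fun w => ~ (fun w => peval (pi w) phi = true) w).
    + apply algebra_compl, IHphi.
    + apply set_ext. intros w. destruct (peval (pi w) phi); simpl; intuition congruence.
  - replace (fun w => (peval (pi w) phi1 && peval (pi w) phi2)%bool = true)
      with (fun w => (fun w => peval (pi w) phi1 = true) w /\ (fun w => peval (pi w) phi2 = true) w).
    + apply algebra_inter; assumption.
    + apply set_ext. intros w. rewrite andb_true_iff. tauto.
Qed.

(* The cells of the partition of [W] generated by the primitives [ps], each paired with
   the valuation of [ps] that holds throughout it (empty cells included). *)
Fixpoint cells (ps : list nat) : list ((nat -> bool) * (W -> Prop)) :=
  match ps with
  | [] => [(fun _ => false, fun _ => True)]
  | p :: ps' =>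
      flat_map (fun c => [(bupd (fst c) p true, fun w => snd c w /\ pi w p = true);
                          (bupd (fst c) p false, fun w => snd c w /\ ~ pi w p = true)])
               (cells ps')
  end.

Lemma cells_spec ps c : In c (cells ps) ->
  Sig (snd c) /\ forall w, snd c w -> forall q, In q ps -> pi w q = fst c q.
Proof.
  revert c. induction ps as [|p ps IH]; simpl; intros c Hc.
  - destruct Hc as [<-|[]]. split; [apply algebra_full|simpl; tauto].
  - apply in_flat_map in Hc as [c' [Hc' Hin]]. destruct (IH c' Hc') as [HS Hval].
    destruct Hin as [<-|[<-|[]]]; simpl; split.
    + apply algebra_inter; [exact HS|apply Hprim].
    + intros w [Hw Hp] q Hq. unfold bupd.
      destruct (Nat.eqb_spec q p) as [->|Hne]; [exact Hp|].
      destruct Hq as [->|Hq]; [congruence|]. apply Hval; assumption.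
    + apply algebra_inter; [exact HS|apply algebra_compl, Hprim].
    + intros w [Hw Hp] q Hq. unfold bupd.
      destruct (Nat.eqb_spec q p) as [->|Hne]; [destruct (pi w p); congruence|].
      destruct Hq as [->|Hq]; [congruence|]. apply Hval; assumption.
Qed.

Lemma measure_cells_decomp ps X : Sig X ->
  mu X = lsum (fun c => mu (fun w => X w /\ snd c w)) (cells ps).
Proof.
  revert X. induction ps as [|p ps IH]; intros X HX; simpl.
  - unfold lsum; simpl. replace (fun w : W => X w /\ True) with X by (apply set_ext; tauto). lra.
  - rewrite lsum_flat_map, (IH X HX). apply lsum_ext. intros c Hc.
    destruct (cells_spec ps c Hc) as [HS _].
    unfold lsum; simpl.
    rewrite (measure_split (fun w => X w /\ snd c w) (fun w => pi w p = true))
      by (try apply algebra_inter; auto).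
    rewrite Rplus_0_r. f_equal; f_equal; apply set_ext; intros; tauto.
Qed.

Lemma measure_sat_set_cells ps phi : (forall q, In q (pvars phi) -> In q ps) ->
  mu (sat_set phi) = lsum (fun c => (if peval (fst c) phi then 1 else 0) * mu (snd c)) (cells ps).
Proof.
  intros Hv. rewrite (measure_cells_decomp ps _ (algebra_sat_set phi)).
  apply lsum_ext. intros c Hc. destruct (cells_spec ps c Hc) as [HS Hval].
  assert (E : forall w, snd c w -> peval (pi w) phi = peval (fst c) phi).
  { intros w Hw. apply peval_agree. intros q Hq. apply Hval; auto. }
  destruct (peval (fst c) phi) eqn:Hp; rewrite ?Rmult_1_l, ?Rmult_0_l.
  - f_equal. apply set_ext. intros w. unfold sat_set.
    split; [tauto|]. intros Hw. rewrite E; auto.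
  - rewrite <- measure_empty. f_equal. apply set_ext. intros w. unfold sat_set.
    split; [|tauto]. intros [H1 H2]. rewrite E in H1 by exact H2. congruence.
Qed.

Lemma cells_mass ps : lsum (fun c => mu (snd c)) (cells ps) = 1.
Proof.
  destruct Hmu as [H1 _]. rewrite <- H1, (measure_cells_decomp ps _ algebra_full).
  apply lsum_ext. intros c _. f_equal. apply set_ext. tauto.
Qed.

Lemma big_disj_count (rho : nat -> pformula) m idx k v : big_disj rho m idx k v ->
  INR k <= lsum (fun j => if peval v (rho (idx j)) then 1 else 0) (seq 0 m).
Proof.
  intros [J [HJ [Hlen [Hm Ht]]]]. rewrite lsum_indicator.
  apply le_INR. rewrite <- Hlen. apply NoDup_incl_length; [exact HJ|].
  intros j Hj. apply filter_In. split; [apply in_seq; specialize (Hm j Hj); lia|auto].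
Qed.

(* Each cell lies in at least [k] of the sets [rho (idx j)], [j < m], and in at least
   [k + n] of them if it lies in [rho (idx m)]; integrating over the cells gives the
   inequality for every probability measure. *)
Lemma measure_hat_ineq ps (rho : nat -> pformula) m n k (idx : nat -> nat) :
  (forall j, (j <= m)%nat -> forall q, In q (pvars (rho (idx j))) -> In q ps) ->
  (forall v, peval v (rho (idx m)) = true -> big_disj rho m idx (k + n) v) ->
  (forall v, big_disj rho m idx k v) ->
  lsum (fun j => mu (sat_set (rho (idx j)))) (seq 0 m) - INR n * mu (sat_set (rho (idx m)))
  >= INR k.
Proof.
  intros Hv Hkn Hk.
  rewrite (lsum_ext _ (fun j => lsum (fun c => (if peval (fst c) (rho (idx j)) then 1 else 0)
                                             * mu (snd c)) (cells ps))).
  2:{ intros j Hj. apply in_seq in Hj. apply measure_sat_set_cells.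
      intros q Hq. apply (Hv j); [lia|exact Hq]. }
  rewrite (measure_sat_set_cells ps) by (apply Hv; lia).
  replace (INR k) with (lsum (fun c => INR k * mu (snd c)) (cells ps))
    by (rewrite lsum_scal_l, cells_mass; ring).
  rewrite lsum_swap, <- lsum_scal_l, Rminus_def, <- lsum_opp, <- lsum_plus.
  apply Rle_ge, lsum_le. intros c Hc. destruct (cells_spec ps c Hc) as [HS _].
  assert (Hm0 : 0 <= mu (snd c)) by (apply measure_nonneg, HS).
  rewrite lsum_scal_r, lsum_indicator.
  destruct (peval (fst c) (rho (idx m))) eqn:HE.
  - assert (Hc' := big_disj_count rho m idx (k + n) (fst c) (Hkn _ HE)).
    rewrite lsum_indicator, plus_INR in Hc'. nra.
  - assert (Hc' := big_disj_count rho m idx k (fst c) (Hk _)).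
    rewrite lsum_indicator in Hc'. nra.
Qed.

End FinitelyAdditive.

(** * Upper probabilities and soundness *)

Lemma psem_measurable (M : ups) phi : ups_Sig M (psem M phi).
Proof. exact (algebra_sat_set _ _ (ups_alg M) (ups_pi M) (ups_prim M) phi). Qed.

Lemma psem_pequiv (M : ups) a b : pequiv a b -> psem M a = psem M b.
Proof. intros H. apply set_ext. intros w. unfold psem. rewrite (H (ups_pi M w)). tauto. Qed.

Lemma upper_lub (M : ups) X : ups_Sig M X ->
  (forall mu, ups_P M mu -> mu X <= upper M X) /\
  (forall c, (forall mu, ups_P M mu -> mu X <= c) -> upper M X <= c).
Proof.
  intros HX. unfold upper.
  set (E := fun r => exists mu, ups_P M mu /\ r = mu X).
  destruct (Lub_Rbar_correct E) as [Hub Hlub].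
  destruct (Lub_Rbar E) as [l| |]; simpl.
  - split.
    + intros mu Hmu. apply (Hub (mu X)). exists mu. auto.
    + intros c Hc. apply (Hlub (Finite c)). intros r [mu [Hmu ->]]. simpl. auto.
  - exfalso. apply (Hlub (Finite 1)). intros r [mu [Hmu ->]]. simpl.
    exact (measure_le_1 _ _ mu (ups_alg M) (ups_meas M mu Hmu) X HX).
  - exfalso. destruct (ups_nonempty M) as [mu Hmu]. apply (Hub (mu X)). exists mu. auto.
Qed.

Lemma upper_const (M : ups) X c : ups_Sig M X ->
  (forall mu, ups_P M mu -> mu X = c) -> upper M X = c.
Proof.
  intros HX Hc. destruct (upper_lub M X HX) as [Hge Hle].
  destruct (ups_nonempty M) as [mu Hmu].
  apply Rle_antisym.
  - apply Hle. intros mu' Hmu'. rewrite Hc by exact Hmu'. lra.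
  - rewrite <- (Hc mu Hmu). apply Hge, Hmu.
Qed.

(* An inequality [sum_j mu (A j) - n * mu B >= k] valid for every [mu] in [P] passes to
   the upper probability: for [n > 0] it bounds [mu B], hence [P^* B], from above. *)
Lemma upper_hat_ineq (M : ups) (A : nat -> ups_W M -> Prop) B m n k :
  (forall j, ups_Sig M (A j)) -> ups_Sig M B ->
  (forall mu, ups_P M mu -> lsum (fun j => mu (A j)) (seq 0 m) - INR n * mu B >= INR k) ->
  lsum (fun j => upper M (A j)) (seq 0 m) - INR n * upper M B >= INR k.
Proof.
  intros HA HB H.
  assert (Hsum : forall mu, ups_P M mu ->
            lsum (fun j => mu (A j)) (seq 0 m) <= lsum (fun j => upper M (A j)) (seq 0 m)).
  { intros mu Hmu. apply lsum_le. intros j _. exact (proj1 (upper_lub M _ (HA j)) mu Hmu). }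
  destruct n as [|n].
  - destruct (ups_nonempty M) as [mu Hmu].
    specialize (H mu Hmu). specialize (Hsum mu Hmu). simpl INR in *. lra.
  - assert (Hn : 0 < INR (S n)) by (apply lt_0_INR; lia).
    assert (HuB : upper M B <= (lsum (fun j => upper M (A j)) (seq 0 m) - INR k) / INR (S n)).
    { apply (proj2 (upper_lub M B HB)). intros mu Hmu.
      specialize (H mu Hmu). specialize (Hsum mu Hmu).
      apply (Rmult_le_reg_l (INR (S n))); [exact Hn|].
      field_simplify; lra. }
    apply (Rmult_le_compat_l (INR (S n))) in HuB; [|lra].
    field_simplify in HuB; lra.
Qed.

Lemma lsat_conj_lits M l0 ls :
  lsat M (conj_lits l0 ls) <-> forall l, In l (l0 :: ls) -> lsat M (lit_formula l).
Proof.
  revert l0; induction ls as [|l1 ls IH]; intros l0; simpl.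
  - split; [intros H l [<-|[]]; exact H|intros H; apply H; auto].
  - rewrite IH. split.
    + intros [H0 H] l [<-|Hl]; auto.
    + intros H; split; auto.
Qed.

Lemma lsat_lit_ineq M (ix : pformula -> nat) (x : nat -> R) l :
  (forall phi, In phi (lit_forms l) -> upper M (psem M phi) = x (ix phi)) ->
  (lsat M (lit_formula l) <-> lit_ineq ix x l).
Proof.
  intros H.
  assert (E : lsum (fun s => fst s * upper M (psem M (snd s))) (term_summands (lit_term l)) =
              lin_val ix x (lit_term l)).
  { apply lsum_ext. intros s Hs. rewrite H; [reflexivity|]. apply in_map, Hs. }
  unfold lit_formula, lit_ineq. destruct (lit_pos l); cbn [lsat]; fold (lsum (fun s => fst s * upper M (psem M (snd s))) (term_summands (lit_term l))); rewrite E.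
  - tauto.
  - split; [apply Rnot_ge_lt|apply Rlt_not_ge].
Qed.

Lemma upper_empty (M : ups) : upper M (fun _ => False) = 0.
Proof.
  apply upper_const; [exact (algebra_empty _ _ (ups_alg M))|].
  intros mu Hmu. exact (measure_empty _ _ mu (ups_alg M) (ups_meas M mu Hmu)).
Qed.

Lemma upper_full (M : ups) : upper M (fun _ => True) = 1.
Proof. apply upper_const; [apply (ups_alg M)|]. intros mu Hmu. apply (ups_meas M mu Hmu). Qed.

Lemma upper_nonneg (M : ups) X : ups_Sig M X -> 0 <= upper M X.
Proof.
  intros HX. destruct (ups_nonempty M) as [mu Hmu].
  eapply Rle_trans; [|exact (proj1 (upper_lub M X HX) mu Hmu)].
  exact (measure_nonneg _ _ mu (ups_meas M mu Hmu) X HX).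
Qed.

Theorem hat_solvable_of_sat Bb ps MN l0 ls rho ix :
  rho_listing ps MN rho -> index_map rho MN ix l0 ls ->
  satisfiable (conj_lits l0 ls) -> exists x, solves_hat rho ix MN Bb l0 ls x.
Proof.
  intros [Hvars [_ [_ [Hfalse Htrue]]]] Hix [M HM].
  exists (fun i => upper M (psem M (rho i))).
  split; [|split; [|split; [|split]]].
  - intros l Hl. apply (lsat_lit_ineq M ix).
    + intros phi Hphi. destruct (Hix l phi Hl Hphi) as [_ He].
      rewrite (psem_pequiv M _ _ He). reflexivity.
    + apply (proj1 (lsat_conj_lits M l0 ls) HM), Hl.
  - rewrite (psem_pequiv M _ _ Hfalse), <- (upper_empty M). f_equal.
    apply set_ext. intros w. unfold psem. simpl. intuition congruence.
  - rewrite (psem_pequiv M _ _ Htrue), <- (upper_full M). f_equal.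
    apply set_ext. intros w. unfold psem. simpl. intuition congruence.
  - intros i _. apply Rle_ge, upper_nonneg, psem_measurable.
  - intros m n k idx _ _ _ Hidx Hkn Hk.
    apply (upper_hat_ineq M (fun j => psem M (rho (idx j)))); try (intros; apply psem_measurable).
    intros mu Hmu.
    apply (measure_hat_ineq _ _ mu (ups_alg M) (ups_meas M mu Hmu) _ (ups_prim M) ps); auto.
    intros j Hj. apply Hvars, Hidx, Hj.
Qed.

(** * The linear system attached to a formula *)

Fixpoint valuations (ps : list nat) : list (nat -> bool) :=
  match ps with
  | [] => [fun _ => false]
  | p :: ps' => flat_map (fun u => [bupd u p true; bupd u p false]) (valuations ps')
  end.

Lemma length_valuations ps : length (valuations ps) = (2 ^ length ps)%nat.
Proof.
  induction ps as [|p ps IH]; [reflexivity|].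
  cbn [valuations length]. rewrite Nat.pow_succ_r', <- IH. clear IH.
  induction (valuations ps) as [|u us IHus]; simpl; [reflexivity|]. lia.
Qed.

Lemma valuations_cover ps (v : nat -> bool) :
  exists u, In u (valuations ps) /\ forall q, In q ps -> v q = u q.
Proof.
  induction ps as [|p ps [u [Hu Hag]]]; simpl.
  - exists (fun _ => false). split; [left; reflexivity|tauto].
  - exists (bupd u p (v p)). split.
    + apply in_flat_map. exists u. split; [exact Hu|]. destruct (v p); simpl; auto.
    + intros q Hq. unfold bupd.
      destruct (Nat.eqb_spec q p) as [->|Hne]; [reflexivity|].
      destruct Hq as [->|Hq]; [congruence|]. apply Hag, Hq.
Qed.

(* Subsets of the atoms [0 .. K-1], as characteristic lists. *)
Fixpoint masks (K : nat) : list (list bool) :=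
  match K with
  | O => [[]]
  | S K' => flat_map (fun s => [true :: s; false :: s]) (masks K')
  end.

Lemma in_masks K s : length s = K -> In s (masks K).
Proof.
  revert s; induction K as [|K IH]; intros [|b s] HS; simpl in *; try lia; auto.
  apply in_flat_map. exists s. split; [apply IH; lia|]. destruct b; simpl; auto.
Qed.

Definition mask_mass (K : nat) (s : list bool) (mu : nat -> R) : R :=
  lsum (fun a => if nth a s false then mu a else 0) (seq 0 K).

(* For a target subset [e] of the atoms and bounds [y], the linear system
   [mu >= 0], [sum mu >= 1], [mu(s) <= y s] for all subsets [s], [mu(e) >= y e]. *)
Inductive lp_row : Type := Nonneg (a : nat) | Mass | Below (s : list bool) | Above.

Definition lp_coef (e : list bool) (r : lp_row) (a : nat) : Z :=
  match r with
  | Nonneg b => if Nat.eqb b a then 1 else 0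
  | Mass => 1
  | Below s => - Z.b2z (nth a s false)
  | Above => Z.b2z (nth a e false)
  end.

Definition lp_rhs (y : list bool -> R) (e : list bool) (r : lp_row) : R :=
  match r with
  | Nonneg _ => 0
  | Mass => 1
  | Below s => - y s
  | Above => y e
  end.

Definition lp_rows (K : nat) : list lp_row :=
  map Nonneg (seq 0 K) ++ Mass :: map Below (masks K) ++ [Above].

Definition lp_certificates (K : nat) (e : list bool) : list (list lp_row) :=
  certificates lp_row (lp_coef e) K (lp_rows K).

(* The bound [B_K] of the theorem: the size of the largest certificate. *)
Definition cert_bound (K : nat) : nat :=
  list_max (map (fun e => list_max (map (@length lp_row) (lp_certificates K e))) (masks K)).

Lemma le_list_max n l : In n l -> (n <= list_max l)%nat.
Proof. intros Hn. apply (Forall_forall (fun k => k <= list_max l)%nat l); [|exact Hn].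
  apply list_max_le, le_n. Qed.

Lemma length_certificate_le K e L :
  In e (masks K) -> In L (lp_certificates K e) -> (length L <= cert_bound K)%nat.
Proof.
  intros He HL. unfold cert_bound.
  eapply Nat.le_trans; [|apply le_list_max, in_map, He]. apply le_list_max, in_map, HL.
Qed.

Lemma IZR_b2z_mult b m : IZR (Z.b2z b) * m = if b then m else 0.
Proof. destruct b; simpl; ring. Qed.

Section LpRowValues.
Variables (K : nat) (e : list bool) (mu : nat -> R).

Lemma row_val_Nonneg b : (b < K)%nat -> row_val lp_row (lp_coef e) K (Nonneg b) mu = mu b.
Proof.
  intros Hb. unfold row_val. simpl.
  rewrite (lsum_ext _ (fun a => if Nat.eqb b a then mu a else 0)), lsum_seq_single
    by (try exact Hb; intros a _; destruct (Nat.eqb b a); simpl; ring).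
  reflexivity.
Qed.

Lemma row_val_Mass : row_val lp_row (lp_coef e) K Mass mu = lsum mu (seq 0 K).
Proof. unfold row_val. simpl. apply lsum_ext. intros; ring. Qed.

Lemma row_val_Below s : row_val lp_row (lp_coef e) K (Below s) mu = - mask_mass K s mu.
Proof.
  unfold row_val, mask_mass. simpl. rewrite <- lsum_opp. apply lsum_ext. intros a _.
  rewrite opp_IZR, Ropp_mult_distr_l_reverse, IZR_b2z_mult. reflexivity.
Qed.

Lemma row_val_Above : row_val lp_row (lp_coef e) K Above mu = mask_mass K e mu.
Proof. unfold row_val, mask_mass. simpl. apply lsum_ext. intros a _. apply IZR_b2z_mult. Qed.

End LpRowValues.

Lemma lp_solution K e y mu :
  (forall r, In r (lp_rows K) -> row_val lp_row (lp_coef e) K r mu >= lp_rhs y e r) ->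
  (forall a, (a < K)%nat -> 0 <= mu a) /\ 1 <= lsum mu (seq 0 K) /\
  (forall s, In s (masks K) -> mask_mass K s mu <= y s) /\ y e <= mask_mass K e mu.
Proof.
  intros H. unfold lp_rows in H. split; [|split; [|split]].
  - intros a Ha. rewrite <- (row_val_Nonneg K e mu a Ha).
    apply Rge_le, (H (Nonneg a)), in_or_app. left. apply in_map, in_seq. lia.
  - rewrite <- (row_val_Mass K e mu).
    apply Rge_le, (H Mass), in_or_app. right. left. reflexivity.
  - intros s Hs. apply Ropp_le_cancel. rewrite <- (row_val_Below K e mu s).
    apply Rge_le, (H (Below s)), in_or_app. right. right. apply in_or_app. left. apply in_map, Hs.
  - rewrite <- (row_val_Above K e mu).
    apply Rge_le, (H Above), in_or_app. right. right. apply in_or_app. right. left. reflexivity.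
Qed.

Lemma big_disj_of_count (rho : nat -> pformula) m idx k v :
  (k <= length (filter (fun j => peval v (rho (idx j))) (seq 0 m)))%nat ->
  big_disj rho m idx k v.
Proof.
  intros Hk. set (F := filter (fun j => peval v (rho (idx j))) (seq 0 m)).
  assert (HF : forall j, In j (firstn k F) -> In j F).
  { intros j Hj. rewrite <- (firstn_skipn k F). apply in_or_app. left. exact Hj. }
  exists (firstn k F). split; [|split; [|split]].
  - apply (NoDup_app_remove_r _ (skipn k F)). rewrite firstn_skipn.
    apply NoDup_filter, seq_NoDup.
  - apply firstn_length_le, Hk.
  - intros j Hj. apply HF, filter_In in Hj as [Hj _]. apply in_seq in Hj. lia.
  - intros j Hj. apply HF, filter_In in Hj as [_ Hj]. exact Hj.
Qed.

Lemma length_filter_nth_seq (g : nat -> bool) (L : list nat) d :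
  length (filter (fun j => g (nth j L d)) (seq 0 (length L))) = length (filter g L).
Proof.
  apply INR_eq. rewrite <- !lsum_indicator.
  exact (lsum_nth_seq (fun i => if g i then 1 else 0) L d).
Qed.

Definition is_mass (r : lp_row) : bool := match r with Mass => true | _ => false end.
Definition is_above (r : lp_row) : bool := match r with Above => true | _ => false end.

(* Reading a certificate [L] for the target [e] as an instance of the hat inequalities,
   with every atom [a < K] standing for the valuations that agree with [V a]:
   the [Below s] rows give the list [i_1, ..., i_m], the [Above] rows give [n],
   and the [Mass] rows give [k]. *)
Section CertificateInstance.
Variables (K MN Bb : nat) (V : nat -> nat -> bool) (rho : nat -> pformula) (x : nat -> R).
Variables (idx_of : list bool -> nat) (e : list bool).
Hypothesis atoms_cover : forall v, exists a, (a < K)%nat /\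
  forall i, (1 <= i <= MN)%nat -> peval v (rho i) = peval (V a) (rho i).
Hypothesis idx_of_range : forall s, (1 <= idx_of s <= MN)%nat.
Hypothesis idx_of_sound : forall s a, (a < K)%nat -> nth a s false = true ->
  peval (V a) (rho (idx_of s)) = true.
Hypothesis idx_of_target : forall a, (a < K)%nat -> nth a e false = peval (V a) (rho (idx_of e)).
Hypothesis hat_ineqs : forall (m n k : nat) (idx : nat -> nat),
  (m <= Bb)%nat -> (n <= Bb)%nat -> (k <= Bb)%nat ->
  (forall j, (j <= m)%nat -> (1 <= idx j <= MN)%nat) ->
  (forall v, peval v (rho (idx m)) = true -> big_disj rho m idx (k + n) v) ->
  (forall v, big_disj rho m idx k v) ->
  sumx x m idx - INR n * x (idx m) >= INR k.

Definition below_idx (r : lp_row) : list nat :=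
  match r with Below s => [idx_of s] | _ => [] end.

Definition below_indices (L : list lp_row) : list nat := flat_map below_idx L.

Lemma length_below_indices L : (length (below_indices L) <= length L)%nat.
Proof. induction L as [|[] L IH]; simpl; lia. Qed.

Lemma lsum_lp_rhs L :
  lsum (lp_rhs (fun s => x (idx_of s)) e) L =
  INR (length (filter is_mass L)) - lsum x (below_indices L)
  + INR (length (filter is_above L)) * x (idx_of e).
Proof.
  unfold below_indices. rewrite <- !lsum_indicator, lsum_flat_map, <- lsum_scal_r.
  rewrite Rminus_def, <- lsum_opp, <- !lsum_plus.
  apply lsum_ext. intros [a| |s|] _; unfold lsum; simpl; ring.
Qed.

(* Since every variable cancels in [L], the sets [rho (idx_of s)] over the [Below s]
   rows cover each atom at least [k] times, and [k + n] times inside the target. *)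
Lemma below_indices_count L v a :
  (a < K)%nat -> (forall i, (1 <= i <= MN)%nat -> peval v (rho i) = peval (V a) (rho i)) ->
  comb_coef lp_row (lp_coef e) L a = 0%Z ->
  (Z.of_nat (length (filter is_mass L)) +
   Z.b2z (nth a e false) * Z.of_nat (length (filter is_above L))
   <= Z.of_nat (length (filter (fun i => peval v (rho i)) (below_indices L))))%Z.
Proof.
  intros Ha Hagree Hzero. unfold below_indices.
  rewrite length_filter_flat_map, !length_filter_zsum, <- zsum_scal_l, <- zsum_plus.
  unfold comb_coef in Hzero. rewrite <- Z.add_0_r, <- Hzero, <- zsum_plus. apply zsum_le. intros [b| |s|] _; simpl.
  - destruct (Nat.eqb b a); simpl; lia.
  - destruct (nth a e false); simpl; lia.
  - destruct (nth a s false) eqn:Hs; simpl; [|destruct (peval v (rho (idx_of s))); simpl; lia].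
    rewrite Hagree, idx_of_sound by auto. simpl. lia.
  - destruct (nth a e false); simpl; lia.
Qed.

Lemma certificate_covers L v : In L (lp_certificates K e) ->
  exists a, (a < K)%nat /\ peval v (rho (idx_of e)) = nth a e false /\
  (length (filter is_mass L) + (if nth a e false then length (filter is_above L) else 0)
   <= length (filter (fun i => peval v (rho i)) (below_indices L)))%nat.
Proof.
  intros HL. destruct (atoms_cover v) as [a [Ha Hagree]]. exists a.
  split; [exact Ha|]. split; [rewrite Hagree, idx_of_target; auto|].
  assert (Hc := below_indices_count L v a Ha Hagree (certificates_comb_coef _ _ _ _ L a HL Ha)).
  destruct (nth a e false); cbn [Z.b2z] in Hc; lia.
Qed.

Lemma below_indices_range L i : In i (below_indices L) -> (1 <= i <= MN)%nat.
Proof.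
  intros Hi. apply in_flat_map in Hi as [[] [_ Hr]]; simpl in Hr; try contradiction.
  destruct Hr as [<-|[]]. apply idx_of_range.
Qed.

Lemma certificate_rhs_nonpos L :
  In L (lp_certificates K e) -> (length L <= Bb)%nat ->
  lsum (lp_rhs (fun s => x (idx_of s)) e) L <= 0.
Proof.
  intros HL Hlen.
  set (Lst := below_indices L). set (m := length Lst).
  set (idx := fun j => nth j Lst (idx_of e)).
  set (n := length (filter is_above L)). set (k := length (filter is_mass L)).
  assert (Hidx_m : idx m = idx_of e) by (apply nth_overflow, le_n).
  assert (Hcount : forall v, length (filter (fun j => peval v (rho (idx j))) (seq 0 m)) =
                             length (filter (fun i => peval v (rho i)) Lst))
    by (intros v; apply (length_filter_nth_seq (fun i => peval v (rho i)))).
  assert (Hhat : sumx x m idx - INR n * x (idx m) >= INR k).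
  { apply hat_ineqs.
    - pose proof (length_below_indices L) as H. fold Lst m in H. lia.
    - pose proof (filter_length_le is_above L) as H. fold n in H. lia.
    - pose proof (filter_length_le is_mass L) as H. fold k in H. lia.
    - intros j Hj. destruct (Nat.eq_dec j m) as [->|Hne]; [rewrite Hidx_m; apply idx_of_range|].
      apply (below_indices_range L), nth_In. fold Lst m. lia.
    - intros v Hv. apply big_disj_of_count. rewrite Hcount.
      destruct (certificate_covers L v HL) as [a [_ [Ha Hc]]].
      rewrite Hidx_m, Hv in *. rewrite <- Ha in Hc. exact Hc.
    - intros v. apply big_disj_of_count. rewrite Hcount.
      destruct (certificate_covers L v HL) as [a [_ [_ Hc]]]. fold Lst k in Hc. lia. }
  assert (Hsum : sumx x m idx = lsum x Lst) by apply lsum_nth_seq.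
  rewrite lsum_lp_rhs. fold Lst n k. rewrite Hsum, Hidx_m in Hhat. lra.
Qed.

End CertificateInstance.

(** * The finite model *)

Section FiniteModel.
Variables (ps : list nat) (l0 : literal) (ls : list literal).
Variables (rho : nat -> pformula) (ix : pformula -> nat) (x : nat -> R).
Let K := (2 ^ length ps)%nat.
Let MN := (2 ^ K)%nat.
Hypothesis rho_listed : rho_listing ps MN rho.
Hypothesis ix_map : index_map rho MN ix l0 ls.
Hypothesis x_solves : solves_hat rho ix MN (cert_bound K) l0 ls x.

Lemma K_neq_0 : K <> 0%nat.
Proof. apply Nat.pow_nonzero. lia. Qed.

Lemma MN_pos : (1 <= MN)%nat.
Proof. assert (MN <> 0%nat) by (apply Nat.pow_nonzero; lia). lia. Qed.

Definition atom (a : nat) : nat -> bool := nth a (valuations ps) (fun _ => false).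

Definition mask (i : nat) : list bool := map (fun u => peval u (rho i)) (valuations ps).

Definition idx_of (s : list bool) : nat :=
  match find (fun i => if list_eq_dec bool_dec (mask i) s then true else false) (seq 1 MN) with
  | Some i => i
  | None => MN
  end.

Lemma atoms_agree v : exists a, (a < K)%nat /\
  forall i, (1 <= i <= MN)%nat -> peval v (rho i) = peval (atom a) (rho i).
Proof.
  destruct (valuations_cover ps v) as [u [Hu Hagree]].
  destruct (In_nth _ _ (fun _ => false) Hu) as [a [Ha Hnth]].
  exists a. rewrite length_valuations in Ha. split; [exact Ha|].
  intros i Hi. unfold atom. rewrite Hnth. apply peval_agree.
  intros q Hq. apply Hagree. destruct rho_listed as [Hvars _]. exact (Hvars i Hi q Hq).
Qed.

Lemma nth_mask a i : (a < K)%nat -> nth a (mask i) false = peval (atom a) (rho i).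
Proof.
  intros Ha. unfold mask, atom.
  rewrite (nth_indep _ false (peval (fun _ => false) (rho i)))
    by (rewrite length_map, length_valuations; exact Ha).
  apply (map_nth (fun u => peval u (rho i))).
Qed.

Lemma mask_in_masks i : In (mask i) (masks K).
Proof. apply in_masks. unfold mask. rewrite length_map, length_valuations. reflexivity. Qed.

Lemma idx_of_range s : (1 <= idx_of s <= MN)%nat.
Proof.
  unfold idx_of. destruct (find _ _) eqn:E.
  - apply find_some in E as [E _]. apply in_seq in E. lia.
  - pose proof MN_pos. lia.
Qed.

Lemma idx_of_sound s a : (a < K)%nat -> nth a s false = true ->
  peval (atom a) (rho (idx_of s)) = true.
Proof.
  intros Ha Hs. unfold idx_of. destruct (find _ _) as [i|] eqn:E.
  - apply find_some in E as [_ E].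
    destruct (list_eq_dec bool_dec (mask i) s) as [<-|]; [|discriminate].
    rewrite <- nth_mask by exact Ha. exact Hs.
  - destruct rho_listed as [_ [_ [_ [_ Htrue]]]]. rewrite (Htrue (atom a)). reflexivity.
Qed.

(* Distinct listed formulas are inequivalent, so a formula is determined by its mask. *)
Lemma idx_of_mask i : (1 <= i <= MN)%nat -> idx_of (mask i) = i.
Proof.
  intros Hi. unfold idx_of. destruct (find _ _) as [j|] eqn:E.
  - apply find_some in E as [Hj E]. apply in_seq in Hj.
    destruct (list_eq_dec bool_dec (mask j) (mask i)) as [Hm|]; [|discriminate].
    destruct rho_listed as [_ [Hinj _]]. apply Hinj; try lia.
    intros v. destruct (atoms_agree v) as [a [Ha Hagree]].
    rewrite !Hagree, <- !nth_mask, Hm by (exact Ha || lia). reflexivity.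
  - exfalso. assert (H := find_none _ _ E i ltac:(apply in_seq; lia)). simpl in H.
    destruct (list_eq_dec bool_dec (mask i) (mask i)); [discriminate|congruence].
Qed.

Definition feasible (mu : nat -> R) : Prop :=
  (forall a, (a < K)%nat -> 0 <= mu a) /\ lsum mu (seq 0 K) = 1 /\
  (forall s, In s (masks K) -> mask_mass K s mu <= x (idx_of s)).

Lemma mask_mass_true mu : mask_mass K (mask MN) mu = lsum mu (seq 0 K).
Proof.
  apply lsum_ext. intros a Ha. apply in_seq in Ha.
  rewrite nth_mask by lia. destruct rho_listed as [_ [_ [_ [_ Htrue]]]].
  rewrite (Htrue (atom a)). reflexivity.
Qed.

Lemma feasible_attaining i : (1 <= i <= MN)%nat ->
  exists mu, feasible mu /\ x i <= mask_mass K (mask i) mu.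
Proof.
  intros Hi. destruct x_solves as [_ [_ [HxMN [_ Hhat]]]].
  destruct (certificates_farkas lp_row (lp_coef (mask i)) K (lp_rows K)
              (lp_rhs (fun s => x (idx_of s)) (mask i))) as [mu Hmu].
  - intros L HL.
    apply (certificate_rhs_nonpos K MN (cert_bound K) atom rho x idx_of (mask i));
      auto using atoms_agree, idx_of_range, idx_of_sound.
    + intros a Ha. rewrite idx_of_mask, nth_mask by assumption. reflexivity.
    + exact (length_certificate_le K (mask i) L (mask_in_masks i) HL).
  - destruct (lp_solution K (mask i) (fun s => x (idx_of s)) mu Hmu)
      as [Hnonneg [Hmass [Hbelow Habove]]].
    exists mu. rewrite idx_of_mask in Habove by exact Hi.
    split; [|exact Habove]. split; [exact Hnonneg|]. split; [|exact Hbelow].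
    assert (Hle := Hbelow _ (mask_in_masks MN)).
    rewrite mask_mass_true, idx_of_mask, HxMN in Hle by (pose proof MN_pos; lia).
    lra.
Qed.

Definition world : Type := {a : nat | (a < K)%nat}.

Definition to_world (a : nat) : world :=
  exist _ (a mod K) (Nat.mod_upper_bound a K K_neq_0).

Definition worlds : list world := map to_world (seq 0 K).

Lemma worlds_complete w : In w worlds.
Proof.
  destruct w as [a Ha]. apply in_map_iff. exists a. split; [|apply in_seq; lia].
  unfold to_world. generalize (Nat.mod_upper_bound a K K_neq_0).
  rewrite Nat.mod_small by exact Ha. intros H'. f_equal. apply le_unique.
Qed.

Definition world_measure (mu : nat -> R) (X : world -> Prop) : R :=
  lsum (fun w => if excluded_middle_informative (X w) then mu (proj1_sig w) else 0) worlds.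

Lemma lsum_worlds (g : nat -> R) :
  lsum (fun w => g (proj1_sig w)) worlds = lsum g (seq 0 K).
Proof.
  unfold worlds. rewrite lsum_map. apply lsum_ext. intros a Ha. apply in_seq in Ha.
  simpl. rewrite Nat.mod_small by lia. reflexivity.
Qed.

Lemma world_measure_fa mu : feasible mu ->
  is_fa_prob (fun _ : world -> Prop => True) (world_measure mu).
Proof.
  intros [Hnonneg [Htotal _]]. split; [|split].
  - unfold world_measure. rewrite <- Htotal, <- lsum_worlds. apply lsum_ext. intros w _.
    destruct (excluded_middle_informative True) as [_|[]]; [reflexivity|exact I].
  - intros X _. apply lsum_nonneg. intros [a Ha] _.
    destruct (excluded_middle_informative _); [apply Hnonneg, Ha|lra].
  - intros X Y _ _ Hdisj. unfold world_measure. rewrite <- lsum_plus. apply lsum_ext.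
    intros w _.
    destruct (excluded_middle_informative (X w \/ Y w)) as [HXY|HXY];
    destruct (excluded_middle_informative (X w)) as [HX|HX];
    destruct (excluded_middle_informative (Y w)) as [HY|HY];
    try ring; try tauto. exfalso. exact (Hdisj w HX HY).
Qed.

Definition model_P (m : (world -> Prop) -> R) : Prop :=
  exists mu, feasible mu /\ m = world_measure mu.

Lemma model_P_nonempty : exists m, model_P m.
Proof.
  destruct (feasible_attaining 1%nat ltac:(pose proof MN_pos; lia)) as [mu [Hmu _]].
  exists (world_measure mu), mu. split; [exact Hmu|reflexivity].
Qed.

Lemma model_P_fa m : model_P m -> is_fa_prob (fun _ : world -> Prop => True) m.
Proof. intros [mu [Hmu ->]]. apply world_measure_fa, Hmu. Qed.

Definition finite_model : ups :=
  mkUPS world (fun _ => True) model_P (fun w => atom (proj1_sig w))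
    (conj I (conj (fun _ _ => I) (fun _ _ _ _ => I))) model_P_fa model_P_nonempty (fun _ => I).

Lemma world_measure_rho mu j :
  world_measure mu (psem finite_model (rho j)) = mask_mass K (mask j) mu.
Proof.
  unfold world_measure, mask_mass, worlds. rewrite lsum_map. apply lsum_ext.
  intros a Ha. apply in_seq in Ha. unfold psem. simpl. rewrite Nat.mod_small, nth_mask by lia.
  destruct (excluded_middle_informative _) as [E|E]; [rewrite E; reflexivity|].
  destruct (peval (atom a) (rho j)); [exfalso; apply E|]; reflexivity.
Qed.

Lemma upper_rho j : (1 <= j <= MN)%nat -> upper finite_model (psem finite_model (rho j)) = x j.
Proof.
  intros Hj. destruct (upper_lub finite_model (psem finite_model (rho j)) I) as [Hge Hle].
  destruct (feasible_attaining j Hj) as [mu [Hmu Hattain]].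
  apply Rle_antisym.
  - apply Hle. intros m [mu' [[_ [_ Hbelow]] ->]]. rewrite world_measure_rho.
    rewrite <- (idx_of_mask j Hj) at 2. apply Hbelow, mask_in_masks.
  - eapply Rle_trans; [|apply (Hge (world_measure mu)); exists mu; split; [exact Hmu|reflexivity]].
    rewrite world_measure_rho. exact Hattain.
Qed.

Lemma finite_model_sat : lsat finite_model (conj_lits l0 ls).
Proof.
  apply lsat_conj_lits. intros l Hl. apply (lsat_lit_ineq finite_model ix x l).
  - intros phi Hphi. destruct (ix_map l phi Hl Hphi) as [Hr He].
    rewrite <- (psem_pequiv finite_model _ _ He). apply upper_rho, Hr.
  - destruct x_solves as [Hbar _]. apply Hbar, Hl.
Qed.

Lemma finite_model_worlds : at_most_worlds finite_model K.
Proof.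
  exists worlds. split; [exact worlds_complete|].
  unfold worlds. rewrite length_map, length_seq. reflexivity.
Qed.

End FiniteModel.

Lemma length_pvars_le phi : (length (pvars phi) <= psize phi)%nat.
Proof. induction phi; simpl; try rewrite length_app; lia. Qed.

Lemma length_props_of_le f : (length (props_of f) <= lsize f)%nat.
Proof.
  unfold props_of. eapply Nat.le_trans.
  { apply NoDup_incl_length; [apply NoDup_nodup|]. intros q Hq. apply nodup_In in Hq. exact Hq. }
  induction f as [t a| |]; cbn [lprops lsize]; try rewrite length_app; try lia.
  unfold term_size. induction (term_summands t) as [|s L IH]; cbn [flat_map fold_right]; [simpl; lia|].
  rewrite length_app. pose proof (length_pvars_le (snd s)).
  change (summand_size s) with (4 + psize (snd s))%nat. lia.
Qed.

Theorem proposition3 :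
  exists B : nat -> nat,
  forall (l0 : literal) (ls : list literal)
         (rho : nat -> pformula) (ix : pformula -> nat),
    let f := conj_lits l0 ls in
    let N := length (props_of f) in
    let MN := (2 ^ (2 ^ N))%nat in
    rho_listing (props_of f) MN rho ->
    index_map rho MN ix l0 ls ->
    (satisfiable f <->
       exists x : nat -> R, solves_hat rho ix MN (B (2 ^ N)%nat) l0 ls x) /\
    ((exists x : nat -> R, solves_hat rho ix MN (B (2 ^ N)%nat) l0 ls x) ->
       exists M : ups, at_most_worlds M (2 ^ lsize f) /\ lsat M f).
Proof.
  exists cert_bound. intros l0 ls rho ix f N MN Hrho Hix.
  assert (Hmodel : (exists x, solves_hat rho ix MN (cert_bound (2 ^ N)) l0 ls x) ->
                   exists M, at_most_worlds M (2 ^ lsize f) /\ lsat M f).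
  { intros [x Hx]. exists (finite_model (props_of f) l0 ls rho ix x Hrho Hx). split.
    - destruct (finite_model_worlds (props_of f) l0 ls rho ix x Hrho Hx) as [ws [Hall Hlen]].
      exists ws. split; [exact Hall|]. eapply Nat.le_trans; [exact Hlen|].
      apply Nat.pow_le_mono_r; [lia|apply length_props_of_le].
    - apply finite_model_sat; assumption. }
  split; [split|exact Hmodel].
  - apply (hat_solvable_of_sat _ (props_of f) MN); assumption.
  - intros Hsol. destruct (Hmodel Hsol) as [M [_ HM]]. exists M. exact HM.
Qed.
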